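(* Let $p,s\in\mathbf R$ with $s>0$. For a positive integer $n$, an arbitrary $n\times n$ complex matrix $H$ and a positive semidefinite $n\times n$ matrix $L$, define on positive definite $n\times n$ matrices $A$ \[ \psi_{L,H}(A)=\operatorname{Tr}\bigl(L+H^*A^pH\bigr)^s . \] Then the following are equivalent: (i) for every $n$, every $n\times n$ matrix $H$ and every positive semidefinite $n\times n$ matrix $L$, the map $A\mapsto\psi_{L,H}(A)$ is convex; (ii) for every $n$ and every $n\times n$ matrix $H$, the map $A\mapsto\psi_{0,H}(A)$ is convex. The same equivalence holds with ''convex'' replaced by ''concave''.
   Context: $A^p$ is defined by functional calculus for positive definite $A$; for a positive semidefinite matrix $M$ and $s>0$, $M^s$ is defined by functional calculus with the convention $0^s=0$. *)

From HB Require Import structures.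
From mathcomp Require Import all_boot all_order all_algebra.
From mathcomp Require Import boolp reals exp.
From mathcomp Require Import complex.
Set Implicit Arguments. Unset Strict Implicit. Unset Printing Implicit Defensive.
Import Order.TTheory GRing.Theory Num.Theory.
Local Open Scope ring_scope.

Section MatrixDefs.
Variable R : realType.
Local Notation C := (complex R).

Definition rC (x : R) : C := Complex x 0.

Definition adj_mx m n (A : 'M[C]_(m, n)) : 'M[C]_(n, m) :=
  map_mx (fun z : C => Num.conj z) A^T.

Definition hermitian n (A : 'M[C]_n) : Prop := adj_mx A = A.

(* positive semidefinite / positive definite (order of the numClosedField C:
   0 <= z means z is real and nonnegative) *)
Definition psd n (A : 'M[C]_n) : Prop :=
  hermitian A /\ forall v : 'cV[C]_n, 0 <= (adj_mx v *m A *m v) 0 0.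
Definition pd n (A : 'M[C]_n) : Prop :=
  hermitian A /\ forall v : 'cV[C]_n, v != 0 -> 0 < (adj_mx v *m A *m v) 0 0.

Definition unitary n (U : 'M[C]_n) : Prop := adj_mx U *m U = 1%:M.

Definition spec_decomp n (M : 'M[C]_n) (Ud : 'M[C]_n * 'rV[R]_n) : Prop :=
  unitary Ud.1 /\ M = Ud.1 *m diag_mx (map_mx rC Ud.2) *m adj_mx Ud.1.

(* functional calculus f(M) := U diag(f(d)) U^* for a (chosen) spectral
   decomposition of M (exists for every Hermitian M); 0 if M has none. *)
Definition mxfun n (f : R -> R) (M : 'M[C]_n) : 'M[C]_n :=
  match pselect (exists Ud, spec_decomp M Ud) with
  | left H => let Ud := proj1_sig (cid H) in
      Ud.1 *m diag_mx (map_mx (fun x => rC (f x)) Ud.2) *m adj_mx Ud.1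
  | right _ => 0
  end.

(* M^s via functional calculus with real power powR; powR 0 s = 0 for s <> 0 *)
Definition mxpow n (M : 'M[C]_n) (s : R) : 'M[C]_n := mxfun (fun x => powR x s) M.

(* psi_{L,H}(A) = Tr (L + H^* A^p H)^s  (a real number; we take its real part) *)
Definition psi n (p s : R) (L H : 'M[C]_n) (A : 'M[C]_n) : R :=
  complex.Re (\tr (mxpow (L + adj_mx H *m mxpow A p *m H) s)).

Definition convex_pd n (f : 'M[C]_n -> R) : Prop :=
  forall A B : 'M[C]_n, pd A -> pd B -> forall t : R, 0 <= t <= 1 ->
    f (rC t *: A + rC (1 - t) *: B) <= t * f A + (1 - t) * f B.
Definition concave_pd n (f : 'M[C]_n -> R) : Prop :=
  forall A B : 'M[C]_n, pd A -> pd B -> forall t : R, 0 <= t <= 1 ->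
    t * f A + (1 - t) * f B <= f (rC t *: A + rC (1 - t) *: B).

End MatrixDefs.

(** Embed the n x n positive definite matrices affinely into the (2n) x (2n)
ones by X |-> diag(X, 1), and write L = K^* K.  For H' = [[H, 0], [K, 0]] one
gets H'^* diag(X^p, 1) H' = diag(H^* X^p H + L, 0), and the functional
calculus acts blockwise with 0^s = 0, so psi_{0,H'}(diag(X, 1)) = psi_{L,H}(X).
Convexity (concavity) of psi_{0,H'} therefore restricts to psi_{L,H}. *)
From Pilot Require Import Defs.
From HB Require Import structures.
From mathcomp Require Import all_boot all_order all_algebra.
From mathcomp Require Import boolp reals exp.
From mathcomp Require Import complex.
Set Implicit Arguments. Unset Strict Implicit. Unset Printing Implicit Defensive.
Import Order.TTheory GRing.Theory Num.Theory Num.Def.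
Local Open Scope ring_scope.

Section BlockExtension.
Variable R : realType.
Local Notation C := (complex R).
Local Notation adj := (@adj_mx R _ _).
Local Notation qform X v := ((adj v *m X *m v) 0 0).
Implicit Types (x y : R).

Lemma rCE x : rC x = (x%:C)%C.
Proof. by []. Qed.

Lemma rCD x y : rC (x + y) = rC x + rC y.
Proof. by rewrite !rCE rmorphD. Qed.

Lemma rCM x y : rC (x * y) = rC x * rC y.
Proof. by rewrite !rCE rmorphM. Qed.

Lemma rC_conj x : Num.conj (rC x) = rC x.
Proof. by rewrite /rC; apply/eqP; rewrite eq_complex /= oppr0 !eqxx. Qed.

Lemma rC_ge0 x : (0 <= rC x) = (0 <= x).
Proof. by rewrite /rC lecE /= eqxx. Qed.

Lemma rC_inj : injective (@rC R).
Proof. by move=> x y []. Qed.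

Lemma rC_Re (z : C) : z \is Num.real -> rC (complex.Re z) = z.
Proof. by case: z => a b; rewrite realE /rC !lecE /= => /orP[] /andP[/eqP-> _]. Qed.

Lemma adjM m n k (A : 'M[C]_(m, n)) (B : 'M[C]_(n, k)) :
  adj (A *m B) = adj B *m adj A.
Proof. by rewrite /adj_mx trmx_mul map_mxM. Qed.

Lemma adjK m n (A : 'M[C]_(m, n)) : adj (adj A) = A.
Proof. by apply/matrixP => i j; rewrite !mxE conjCK. Qed.

Lemma adjD m n (A B : 'M[C]_(m, n)) : adj (A + B) = adj A + adj B.
Proof. by apply/matrixP => i j; rewrite !mxE rmorphD. Qed.

Lemma adjZ m n a (A : 'M[C]_(m, n)) : adj (a *: A) = Num.conj a *: adj A.
Proof. by apply/matrixP => i j; rewrite !mxE rmorphM. Qed.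

Lemma adj0 m n : adj (0 : 'M[C]_(m, n)) = 0.
Proof. by apply/matrixP => i j; rewrite !mxE rmorph0. Qed.

Lemma adj1 n : adj (1%:M : 'M[C]_n) = 1%:M.
Proof.
by apply/matrixP => i j; rewrite !mxE eq_sym; case: eqP; rewrite ?rmorph1 ?rmorph0.
Qed.

Lemma adj_block m1 m2 n1 n2 (A : 'M[C]_(m1, n1)) (B : 'M[C]_(m1, n2))
    (D : 'M[C]_(m2, n1)) (E : 'M[C]_(m2, n2)) :
  adj (block_mx A B D E) = block_mx (adj A) (adj D) (adj B) (adj E).
Proof. by rewrite /adj_mx tr_block_mx map_block_mx. Qed.

Lemma adj_col m1 m2 n (A : 'M[C]_(m1, n)) (B : 'M[C]_(m2, n)) :
  adj (col_mx A B) = row_mx (adj A) (adj B).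
Proof. by rewrite /adj_mx tr_col_mx map_row_mx. Qed.

Lemma adj_diag_rC n (g : R -> R) (d : 'rV[R]_n) :
  adj (diag_mx (map_mx (fun x => rC (g x)) d)) = diag_mx (map_mx (fun x => rC (g x)) d).
Proof.
apply/matrixP => i j; rewrite !mxE eq_sym.
by case: eqP => [->|]; rewrite ?mulr1n ?mulr0n ?rC_conj ?rmorph0.
Qed.

Lemma adj_delta n (i : 'I_n) : adj (delta_mx i 0 : 'cV[C]_n) = delta_mx 0 i.
Proof.
by apply/matrixP => a b; rewrite !mxE; do 2!case: eqP; rewrite ?rmorph1 ?rmorph0.
Qed.

Lemma hermitian_comb n (A B : 'M[C]_n) x y :
  Defs.hermitian A -> Defs.hermitian B -> Defs.hermitian (rC x *: A + rC y *: B).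
Proof. by move=> hA hB; rewrite /Defs.hermitian adjD !adjZ !rC_conj hA hB. Qed.

Lemma hermitian_adjMr n (K : 'M[C]_n) : Defs.hermitian (adj K *m K).
Proof. by rewrite /Defs.hermitian adjM adjK. Qed.

Lemma unitaryC n (U : 'M[C]_n) : unitary U -> U *m adj U = 1%:M.
Proof. exact: mulmx1C. Qed.

Lemma unitary_block n1 n2 (U : 'M[C]_n1) (V : 'M[C]_n2) :
  unitary U -> unitary V -> unitary (block_mx U 0 0 V).
Proof.
move=> uU uV; rewrite /unitary adj_block !adj0 mulmx_block uU uV.
by rewrite !mulmx0 !mul0mx !addr0 !add0r -scalar_mx_block.
Qed.

Lemma hermitian_spec_decomp n (M : 'M[C]_n) :
  Defs.hermitian M -> exists Ud, spec_decomp M Ud.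
Proof.
move=> hM; have hs : M \is hermsymmx.
  by apply/is_hermitianmxP; rewrite expr0 scale1r; exact: esym hM.
have /orthomx_spectralP eM := hermitian_normalmx hs.
have /mxOverP real_diag := hermitian_spectral_diag_real hs.
exists (adj (spectralmx M), map_mx (@complex.Re R) (spectral_diag M)); split => /=.
  by rewrite /unitary adjK; apply/unitarymxP; exact: spectral_unitarymx.
have -> : map_mx (@rC R) (map_mx (@complex.Re R) (spectral_diag M)) = spectral_diag M.
  by apply/matrixP => i j; rewrite !mxE rC_Re.
by rewrite adjK {1}eM invmx_unitary // spectral_unitarymx.
Qed.

Lemma diag_intertwine_fun m n (f : R -> R) (d : 'rV[R]_m) (e : 'rV[R]_n)
    (W : 'M[C]_(n, m)) :
  diag_mx (map_mx (@rC R) e) *m W = W *m diag_mx (map_mx (@rC R) d) ->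
  diag_mx (map_mx (fun x => rC (f x)) e) *m W = W *m diag_mx (map_mx (fun x => rC (f x)) d).
Proof.
move/matrixP=> eWd; apply/matrixP => i j; move: (eWd i j).
rewrite !mul_diag_mx !mul_mx_diag !mxE.
have [->|Wn0] := eqVneq (W i j) 0; first by rewrite !mulr0 !mul0r.
move=> Wde; have /rC_inj -> : rC (e 0 i) = rC (d 0 j).
  by apply: (mulIf Wn0); rewrite Wde mulrC.
by rewrite mulrC.
Qed.

(* The spectral decompositions U d U^* and V e V^* of M are intertwined by the
   unitary V^* U. *)
Lemma spec_decomp_fun_eq n (f : R -> R) (M : 'M[C]_n) U d V e :
  spec_decomp M (U, d) -> spec_decomp M (V, e) ->
  U *m diag_mx (map_mx (fun x => rC (f x)) d) *m adj U =
  V *m diag_mx (map_mx (fun x => rC (f x)) e) *m adj V.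
Proof.
move=> [/= uU MU] [/= uV MV].
have intertwine : diag_mx (map_mx (@rC R) e) *m (adj V *m U) =
                  (adj V *m U) *m diag_mx (map_mx (@rC R) d).
  have := congr1 (fun X => adj V *m X *m U) (etrans (esym MV) MU).
  by rewrite /= !mulmxA uV mul1mx -!mulmxA uU mulmx1 !mulmxA.
have VU_unitary : (adj V *m U) *m adj (adj V *m U) = 1%:M.
  by rewrite adjM adjK mulmxA -(mulmxA _ U) unitaryC // mulmx1 uV.
have -> : U = V *m (adj V *m U) by rewrite mulmxA unitaryC // mul1mx.
rewrite adjM -!mulmxA; congr (_ *m _).
rewrite !mulmxA -(diag_intertwine_fun f intertwine).
by rewrite -(mulmxA _ (adj V *m U)) VU_unitary mulmx1.
Qed.

Lemma mxfun_spec_decomp n (f : R -> R) (M : 'M[C]_n) U d : spec_decomp M (U, d) ->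
  mxfun f M = U *m diag_mx (map_mx (fun x => rC (f x)) d) *m adj U.
Proof.
move=> sd; rewrite /mxfun; case: pselect => [h|[]]; last by exists (U, d).
by case: (cid h) => [[V e]] /= sd'; exact: spec_decomp_fun_eq sd' sd.
Qed.

Lemma hermitian_mxfun n (f : R -> R) (M : 'M[C]_n) : Defs.hermitian (mxfun f M).
Proof.
rewrite /mxfun; case: pselect => [h|_]; last by rewrite /Defs.hermitian adj0.
by case: (cid h) => [[U d]] _ /=; rewrite /Defs.hermitian !adjM adjK adj_diag_rC mulmxA.
Qed.

Lemma mxfun_scalar n (f : R -> R) x :
  mxfun f ((rC x)%:M : 'M[C]_n) = (rC (f x))%:M.
Proof.
have unitary1 : unitary (1%:M : 'M[C]_n) by rewrite /unitary adj1 mulmx1.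
have sx : spec_decomp ((rC x)%:M : 'M[C]_n) (1%:M, const_mx x).
  by split => //=; rewrite adj1 mulmx1 mul1mx map_const_mx diag_const_mx.
by rewrite (mxfun_spec_decomp f sx) /= adj1 mulmx1 mul1mx map_const_mx diag_const_mx.
Qed.

Lemma mxfun_block n1 n2 (f : R -> R) (X : 'M[C]_n1) (Y : 'M[C]_n2) :
  Defs.hermitian X -> Defs.hermitian Y ->
  mxfun f (block_mx X 0 0 Y) = block_mx (mxfun f X) 0 0 (mxfun f Y).
Proof.
move=> /hermitian_spec_decomp [[U d] sX] /hermitian_spec_decomp [[V e] sY].
have sB : spec_decomp (block_mx X 0 0 Y) (block_mx U 0 0 V, row_mx d e).
  case: sX => /= uU ->; case: sY => /= uV ->; split; first exact: unitary_block.
  rewrite /= map_row_mx diag_mx_row adj_block !adj0 !mulmx_block.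
  by rewrite !(mulmx0, mul0mx, addr0, add0r).
rewrite (mxfun_spec_decomp f sX) (mxfun_spec_decomp f sY) (mxfun_spec_decomp f sB).
rewrite /= map_row_mx diag_mx_row adj_block !adj0 !mulmx_block.
by rewrite !(mulmx0, mul0mx, addr0, add0r).
Qed.

Lemma psd0 n : psd (0 : 'M[C]_n).
Proof. by split; [exact: adj0 | move=> v; rewrite mulmx0 mul0mx mxE]. Qed.

(* K = diag(sqrt d) U^* where L = U diag(d) U^*; each d_i is the value of the
   quadratic form of L at U e_i, hence nonnegative. *)
Lemma psd_factor n (L : 'M[C]_n) : psd L -> exists K : 'M[C]_n, adj K *m K = L.
Proof.
move=> [hL qL]; have [[U d] [/= uU eL]] := hermitian_spec_decomp hL.
have d_ge0 i : 0 <= d 0 i.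
  have := qL (U *m delta_mx i 0).
  rewrite eL adjM !mulmxA -!(mulmxA _ (adj U) U) uU !mulmx1 adj_delta.
  by rewrite -rowE -colE !mxE eqxx mulr1n rC_ge0.
exists (diag_mx (map_mx (fun x => rC (Num.sqrt x)) d) *m adj U).
rewrite adjM adjK adj_diag_rC !mulmxA -(mulmxA U) mulmx_diag eL.
congr (_ *m diag_mx _ *m _); apply/matrixP => i j.
by rewrite !mxE -rCM (ord1 i) -expr2 sqr_sqrtr.
Qed.

Lemma qform1_gt0 n (v : 'cV[C]_n) : v != 0 -> 0 < qform 1%:M v.
Proof.
move=> vn0; have [i vi] : exists i, v i 0 != 0.
  apply/existsP; apply: contraR vn0 => /existsPn v0.
  by apply/eqP/matrixP => i j; rewrite (ord1 j) mxE; apply/eqP; rewrite -[_ == _]negbK.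
rewrite mulmx1 mxE (bigD1 i) //= ltr_wpDr //.
  by apply: sumr_ge0 => k _; rewrite !mxE mulrC mul_conjC_ge0.
by rewrite !mxE mulrC mul_conjC_gt0.
Qed.

Lemma pd1 n : pd (1%:M : 'M[C]_n).
Proof. by split; [exact: adj1 | exact: qform1_gt0]. Qed.

Lemma pd_qform_ge0 n (X : 'M[C]_n) (v : 'cV[C]_n) : pd X -> 0 <= qform X v.
Proof.
move=> [_ qX]; have [->|vn0] := eqVneq v 0; first by rewrite mulmx0 mxE.
exact/ltW/qX.
Qed.

Lemma qform_block n1 n2 (X : 'M[C]_n1) (Y : 'M[C]_n2)
    (a : 'cV[C]_n1) (b : 'cV[C]_n2) :
  qform (block_mx X 0 0 Y) (col_mx a b) = qform X a + qform Y b.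
Proof.
rewrite adj_col mul_row_block !(mulmx0, mul0mx, addr0, add0r).
by rewrite mul_row_col mxE.
Qed.

Lemma pd_block n1 n2 (X : 'M[C]_n1) (Y : 'M[C]_n2) :
  pd X -> pd Y -> pd (block_mx X 0 0 Y).
Proof.
move=> pX pY; split; first by rewrite /Defs.hermitian adj_block !adj0 pX.1 pY.1.
move=> v; rewrite -[v]vsubmxK qform_block.
have [->|an0] := eqVneq (usubmx v) 0.
  rewrite col_mx_eq0 eqxx /= => bn0.
  by rewrite ltr_wpDl ?pd_qform_ge0 ?pY.2.
by move=> _; rewrite ltr_pwDl ?pd_qform_ge0 ?pX.2.
Qed.

Lemma block_comb_id n (A B : 'M[C]_n) (t : R) :
  block_mx (rC t *: A + rC (1 - t) *: B) 0 0 1%:M =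
  rC t *: block_mx A 0 0 1%:M + rC (1 - t) *: block_mx B 0 0 (1%:M : 'M[C]_n).
Proof.
rewrite !scale_block_mx add_block_mx !scaler0 addr0 -scalerDl -rCD.
by rewrite addrCA subrr addr0 scale1r.
Qed.

Lemma psi_block_factor n (p s : R) (L H K X : 'M[C]_n) : s != 0 ->
  adj K *m K = L -> Defs.hermitian X ->
  psi p s L H X = psi p s 0 (block_mx H 0 K 0) (block_mx X 0 0 1%:M).
Proof.
move=> s0 KL hX; rewrite /psi /mxpow (mxfun_block _ hX (adj1 n)).
rewrite (mxfun_scalar _ _ 1) powR1 adj_block !adj0 !mulmx_block.
rewrite !(mulmx0, mul0mx, addr0, add0r) mulmx1 KL.
have hL : Defs.hermitian L by rewrite -KL; exact: hermitian_adjMr.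
have hM : Defs.hermitian (adj H *m mxfun (fun x => powR x p) X *m H + L).
  rewrite /Defs.hermitian adjD !adjM adjK hL mulmxA.
  by rewrite (hermitian_mxfun (fun x => powR x p) X).
have pow0 : mxfun (fun x => powR x s) (0 : 'M[C]_n) = 0.
  by have := mxfun_scalar n (fun x => powR x s) 0; rewrite powR0 // rCE !rmorph0.
rewrite (mxfun_block _ hM (adj0 n n)) pow0.
by rewrite mxtrace_block mxtrace0 addr0 addrC.
Qed.

Lemma convex_pd_block n (f : 'M[C]_(n + n) -> R) (g : 'M[C]_n -> R) :
  (forall X, Defs.hermitian X -> g X = f (block_mx X 0 0 1%:M)) ->
  convex_pd f -> convex_pd g.
Proof.
move=> gf cf A B pA pB t t01; have [[hA _] [hB _]] := (pA, pB).
rewrite !gf //; last exact: hermitian_comb hA hB.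
rewrite block_comb_id.
exact: cf (pd_block pA (pd1 n)) (pd_block pB (pd1 n)) t t01.
Qed.

Lemma concave_pd_block n (f : 'M[C]_(n + n) -> R) (g : 'M[C]_n -> R) :
  (forall X, Defs.hermitian X -> g X = f (block_mx X 0 0 1%:M)) ->
  concave_pd f -> concave_pd g.
Proof.
move=> gf cf A B pA pB t t01; have [[hA _] [hB _]] := (pA, pB).
rewrite !gf //; last exact: hermitian_comb hA hB.
rewrite block_comb_id.
exact: cf (pd_block pA (pd1 n)) (pd_block pB (pd1 n)) t t01.
Qed.

End BlockExtension.

Theorem lemma2p2 (R : realType) (p s : R) (hs : 0 < s) :
  ((forall (n : nat), (0 < n)%N -> forall (H L : 'M[complex R]_n), psd L ->
      convex_pd (psi p s L H))
   <-> (forall (n : nat), (0 < n)%N -> forall (H : 'M[complex R]_n),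
      convex_pd (psi p s 0 H)))
  /\
  ((forall (n : nat), (0 < n)%N -> forall (H L : 'M[complex R]_n), psd L ->
      concave_pd (psi p s L H))
   <-> (forall (n : nat), (0 < n)%N -> forall (H : 'M[complex R]_n),
      concave_pd (psi p s 0 H))).
Proof.
have s0 : s != 0 by rewrite gt_eqF.
have double_gt0 n : (0 < n)%N -> (0 < n + n)%N by move=> n0; rewrite addn_gt0 n0.
have extend n (H L : 'M[complex R]_n) : psd L ->
    exists H' : 'M_(n + n), forall X, Defs.hermitian X ->
      psi p s L H X = psi p s 0 H' (block_mx X 0 0 1%:M).
  move=> /psd_factor [K KL]; exists (block_mx H 0 K 0) => X hX.
  exact: psi_block_factor s0 KL hX.
split; split=> [h n n0 H | h n n0 H L /(extend n H L) [H' eH']].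
- by apply: h => //; exact: psd0.
- exact: convex_pd_block eH' (h _ (double_gt0 n n0) H').
- by apply: h => //; exact: psd0.
- exact: concave_pd_block eH' (h _ (double_gt0 n n0) H').
Qed.
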